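(* Let $a>1$ and $\mu_1\in(0,1]$ be constants. Let $n$ be sufficiently large and $d\ge n$. Let $X,Y\in\{0,1\}^d$ be independent and uniform, and let $X'=\mathrm{BSC}_{\frac{1-\rho}{2}}(X)$ with $\rho=\sqrt{\frac{2\ln(a\mu_1 n)-\ln\ln n}{d}}$. There exists a constant $\alpha_1>0$ such that $$\Pr\left[\max\{d_H(X,Y),d_H(X',Y)\}\le\frac d2-\frac{3\rho d}{8}\right]\le(\mu_1 n)^{-(1+\alpha_1)}.$$
   Context: $\mathrm{BSC}_p(x)$ denotes the output of the binary symmetric channel on input $x$: each bit of $x$ is flipped independently with probability $p$. $d_H$ denotes Hamming distance. *)

From HB Require Import structures.
From mathcomp Require Import all_boot all_order all_algebra.
From mathcomp Require Import all_classical all_reals.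
From mathcomp Require Import exp.
Set Implicit Arguments. Unset Strict Implicit. Unset Printing Implicit Defensive.
Import Order.TTheory GRing.Theory Num.Theory.
Local Open Scope ring_scope.

Definition word (d : nat) := {ffun 'I_d -> bool}.

Definition dH (d : nat) (x y : word d) : nat := #|[set i | x i != y i]|.

Section Prob.
Variable R : realType.

(* Pr[ BSC_p(x) = z ] : each bit flipped independently with probability p *)
Definition bsc_prob (d : nat) (p : R) (x z : word d) : R :=
  p ^+ dH x z * (1 - p) ^+ (d - dH x z).

(* Pr[ E(X, X', Y) ] where X, Y are independent uniform on {0,1}^d and
   X' = BSC_p(X) (channel noise independent of Y). *)
Definition prob_XXY (d : nat) (p : R) (E : word d -> word d -> word d -> bool) : R :=
  \sum_(x : word d) \sum_(y : word d) \sum_(z : word d)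
     (2 ^- d) * (2 ^- d) * bsc_prob p x z * (E x z y)%:R.

Definition rho_of (a mu1 : R) (n d : nat) : R :=
  Num.sqrt ((2 * ln (a * mu1 * n%:R) - ln (ln n%:R)) / d%:R).
End Prob.

From HB Require Import structures.
From mathcomp Require Import all_boot all_order all_algebra.
From mathcomp Require Import all_classical all_reals.
From mathcomp Require Import sequences exp.
From mathcomp Require Import ring lra.
Import Order.TTheory GRing.Theory Num.Theory.
Set Implicit Arguments. Unset Strict Implicit. Unset Printing Implicit Defensive.
Local Open Scope ring_scope.

(* Proof strategy: an exponential-moment (Chernoff) bound.
   Write corr x y = d - 2 d_H(x,y) = sum_i (-1)^(x_i + y_i).  On the event
   max{d_H(X,Y), d_H(X',Y)} <= d/2 - 3 rho d / 8 both correlations are at least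
   3 rho d / 4, so with lam = 2 rho / 3 we get rho^2 d <= lam (corr X Y + corr X' Y).
   Hence Pr[event] <= e^(-rho^2 d) E[exp(lam (corr X Y + corr X' Y))].
   The expectation factorizes over the d coordinates: it equals M^d with
   M = p + (1 - p) (e^(2 lam) + e^(-2 lam)) / 2 = 1 + (1 - p)/2 (e^lam - e^-lam)^2,
   where p = (1 - rho)/2 is the crossover probability; for small lam this is at
   most exp((1 - p)/2 (41/20 lam)^2).  The exponent is then at most
   -(13/25) rho^2 d = -(13/25)(2 ln(a mu1 n) - ln ln n), and an elementary
   estimate on y = ln n shows this is below -(1 + 1/50) ln(mu1 n) for n large. *)

Section Correlation.
Variable R : realType.
Variable d : nat.

Lemma dH_le (x y : word d) : (dH x y <= d)%N.
Proof. by rewrite /dH -[X in (_ <= X)%N]card_ord max_card. Qed.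

Lemma prod_if (c : 'I_d -> bool) (u v : R) :
  \prod_(i < d) (if c i then u else v) =
  u ^+ #|[set i | c i]| * v ^+ (d - #|[set i | c i]|).
Proof.
rewrite (bigID c) /= (eq_bigr (fun=> u)); last by move=> i ->.
rewrite [X in _ * X](eq_bigr (fun=> v)); last by move=> i /negbTE ->.
have cardC : #|[pred i | ~~ c i]| = (d - #|[set i | c i]|)%N.
  rewrite -[X in (X - _)%N](card_ord d) -(finset.setCK [set i | c i]) -cardsCs.
  by apply: eq_card => i; rewrite !inE.
by rewrite !prodr_const cardC; congr (_ ^+ _ * _); apply: eq_card => i; rewrite inE.
Qed.

Definition corr (x y : word d) : R := d%:R - 2 * (dH x y)%:R.

Lemma bsc_probE (p : R) (x z : word d) :
  bsc_prob p x z = \prod_(i < d) (if x i != z i then p else 1 - p).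
Proof. by rewrite prod_if. Qed.

Lemma expR_corr (l : R) (x y : word d) :
  expR (l * corr x y) = \prod_(i < d) (if x i != y i then expR (- l) else expR l).
Proof.
rewrite prod_if -!expRM_natr -expRD /corr natrB ?dH_le //; congr expR; ring.
Qed.
End Correlation.

Section MomentGenerating.
Variable R : realType.

(* One-coordinate moment generating function of lam (s_1 + s_2), where s_1, s_2
   are the +-1 correlations of x_i, x'_i with y_i: if the bit is flipped
   (probability p) s_1 + s_2 = 0, otherwise s_1 = s_2 is a uniform sign. *)
Definition mgf_coord (p lam : R) : R :=
  p + (1 - p) * (expR lam ^+ 2 + expR (- lam) ^+ 2) / 2.

Lemma mgf_coordE (p lam : R) :
  mgf_coord p lam = 1 + (1 - p) / 2 * (expR lam - expR (- lam)) ^+ 2.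
Proof.
have ee : expR lam * expR (- lam) = 1 := expRxMexpNx_1 lam.
by rewrite /mgf_coord sqrrB mulr2n ee; field.
Qed.

Lemma sinh_le (lam : R) : 0 <= lam -> lam <= 1/25 ->
  0 <= expR lam - expR (- lam) <= 41/20 * lam.
Proof.
move=> l0 l1; have eN0 : 0 < expR (- lam) := expR_gt0 _.
have eN_ge : 1 - lam <= expR (- lam) by have := expR_ge1Dx (- lam); lra.
have e_ge1 : 1 <= expR lam by have := expR_ge1Dx lam; lra.
have eN_le1 : expR (- lam) <= 1 by rewrite expR_le1; lra.
have e_le : expR lam <= 1 + 21/20 * lam.
  rewrite -[lam]opprK expRN -[_^-1]mul1r ler_pdivrMr // opprK.
  nra.
apply/andP; split; lra.
Qed.

Lemma mgf_coord_le (p lam : R) : p <= 1 -> 0 <= lam -> lam <= 1/25 ->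
  mgf_coord p lam <= expR ((1 - p) / 2 * (41/20 * lam) ^+ 2).
Proof.
move=> p1 l0 l1; have /andP[s0 s1] := sinh_le l0 l1.
rewrite mgf_coordE; apply: le_trans (expR_ge1Dx _); rewrite lerD2l.
by apply: ler_wpM2l; [lra | rewrite lerXn2r // nnegrE; lra].
Qed.

Lemma mgf_coord_pow_le (p lam : R) (d : nat) : p <= 1 -> 0 <= lam -> lam <= 1/25 ->
  mgf_coord p lam ^+ d <= expR (d%:R * ((1 - p) / 2 * (41/20 * lam) ^+ 2)).
Proof.
move=> p1 l0 l1; rewrite expRM_natl lerXn2r ?nnegrE ?expR_ge0 ?mgf_coord_le //.
by rewrite mgf_coordE addr_ge0 // mulr_ge0 ?sqr_ge0 //; lra.
Qed.
End MomentGenerating.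

Section Chernoff.
Variable R : realType.
Variable d : nat.

Lemma sum_word_prod (F : 'I_d -> bool -> R) :
  \sum_(x : word d) \prod_(i < d) F i (x i) = \prod_(i < d) \sum_(b : bool) F i b.
Proof. by rewrite bigA_distr_bigA. Qed.

Lemma mgf_XXY (p lam : R) :
  \sum_(x : word d) \sum_(y : word d) \sum_(z : word d)
    2 ^- d * 2 ^- d * bsc_prob p x z * expR (lam * (corr R x y + corr R z y))
  = mgf_coord p lam ^+ d.
Proof.
pose sgn (b : bool) := if b then expR (- lam) else expR lam.
pose f (a b c : bool) := 4^-1 * (if a != c then p else 1 - p) * sgn (a != b) * sgn (c != b).
have summand x y z : 2 ^- d * 2 ^- d * bsc_prob p x z *
    expR (lam * (corr R x y + corr R z y)) = \prod_(i < d) f (x i) (y i) (z i).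
  rewrite mulrDr expRD bsc_probE !expR_corr /f !big_split /= prodr_const card_ord.
  have -> : (4^-1 : R) ^+ d = 2 ^- d * 2 ^- d.
    by rewrite exprVn -invfM -exprMn; congr (_ ^- _); ring.
  ring.
under eq_bigr => x _ do under eq_bigr => y _ do under eq_bigr => z _ do rewrite summand.
under eq_bigr => x _ do under eq_bigr => y _ do
  rewrite (sum_word_prod (fun i c => f (x i) (y i) c)).
under eq_bigr => x _ do
  rewrite (sum_word_prod (fun i b => \sum_(c : bool) f (x i) b c)).
rewrite (sum_word_prod (fun i a => \sum_(b : bool) \sum_(c : bool) f a b c)).
rewrite prodr_const card_ord; congr (_ ^+ _).
rewrite !big_bool /f /sgn /mgf_coord /= expRN; field.
by rewrite gt_eqF // expR_gt0.
Qed.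

(* Markov's inequality in its exponential form, pointwise. *)
Lemma indicator_le_expR (b : bool) (t : R) : (b -> 0 <= t) -> b%:R <= expR t.
Proof.
case: b => [/(_ isT) t0 | _] /=; last exact: expR_ge0.
by have := expR_ge1Dx t; lra.
Qed.

Lemma bsc_prob_ge0 (p : R) (x z : word d) : 0 <= p -> p <= 1 -> 0 <= bsc_prob p x z.
Proof. by move=> p0 p1; rewrite mulr_ge0 // exprn_ge0 // subr_ge0. Qed.

Lemma prob_XXY_le_mgf (p lam c : R) (E : word d -> word d -> word d -> bool) :
  0 <= p -> p <= 1 ->
  (forall x z y, E x z y -> c <= lam * (corr R x y + corr R z y)) ->
  prob_XXY p E <= expR (- c) * mgf_coord p lam ^+ d.
Proof.
move=> p0 p1 hE; rewrite -mgf_XXY mulr_sumr; apply: ler_sum => x _.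
rewrite mulr_sumr; apply: ler_sum => y _.
rewrite mulr_sumr; apply: ler_sum => z _.
rewrite [X in _ <= X]mulrCA -expRD; apply: ler_wpM2l.
  by rewrite mulr_ge0 ?bsc_prob_ge0 // mulr_ge0 // invr_ge0 exprn_ge0.
by apply: indicator_le_expR => /hE; lra.
Qed.
End Chernoff.

Section Asymptotics.
Variable R : realType.

(* ln grows slower than the square root: ln y = 2 ln (sqrt y) < 2 sqrt y. *)
Lemma ln_lt_2sqrt (y : R) : 0 < y -> ln y < 2 * Num.sqrt y.
Proof.
move=> y0; have s0 : 0 < Num.sqrt y by rewrite sqrtr_gt0.
rewrite -{1}[y]sqr_sqrtr ?ltW // expr2 lnM ?posrE //.
by have := ln_sublinear s0; lra.
Qed.

(* Large constants are written as products so that the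
   arithmetic decision procedures do not expand them as unary numerals. *)
Lemma large_log (la lm y : R) : 0 < la -> lm <= 0 -> 200 * 400 + la - 2 * lm < y ->
  let L := 2 * (la + lm + y) - ln y in
  [/\ 0 <= L, 100 * 100 * L <= expR y & 51/50 * (lm + y) <= 13/25 * L].
Proof.
move=> la0 lm0 hy L; have y0 : 0 < y by lra.
have lny0 : 0 <= ln y by apply: ln_ge0; lra.
have lny_lt := ln_sublinear y0.
split; rewrite /L; first lra.
  have := expR_ge1Dxn 1 (ltW y0); rewrite (_ : 2`!%:R = 2 :> R) //.
  have : 200 * 400 * y <= y ^+ 2 by rewrite expr2; apply: ler_wpM2r; lra.
  lra.
have := ln_lt_2sqrt y0; set s := Num.sqrt y => lny_s; have s0 : 0 <= s := sqrtr_ge0 y.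
have ss : s ^+ 2 = y by rewrite sqr_sqrtr // ltW.
have s104 : 104 <= s by nra.
have : 104 * s <= y by rewrite -ss expr2; exact: ler_wpM2r.
lra.
Qed.

Lemma log_facts (a mu1 : R) (n : nat) : 1 < a -> 0 < mu1 -> mu1 <= 1 ->
  expR (200 * 400 + ln a - 2 * ln mu1) < n%:R ->
  let L := 2 * ln (a * mu1 * n%:R) - ln (ln n%:R) in
  [/\ 0 <= L, 100 * 100 * L <= n%:R & 51/50 * ln (mu1 * n%:R) <= 13/25 * L].
Proof.
move=> a1 mu0 mu1_le hn; have n0 : 0 < n%:R :> R := lt_trans (expR_gt0 _) hn.
have hy : 200 * 400 + ln a - 2 * ln mu1 < ln n%:R.
  by rewrite -[X in X < _]expRK ltr_ln ?posrE ?expR_gt0.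
have a0 : 0 < a by lra.
rewrite !lnM ?posrE ?mulr_gt0 //.
by have := large_log (ln_gt0 a1) (ln_le0 mu1_le) hy; rewrite lnK ?posrE.
Qed.

Lemma rho_facts (a mu1 : R) (n d : nat) :
  let L := 2 * ln (a * mu1 * n%:R) - ln (ln n%:R) in
  0 <= L -> 0 < d%:R :> R -> 100 * 100 * L <= d%:R ->
  let rho := rho_of a mu1 n d in [/\ 0 <= rho, rho <= 1/100 & rho ^+ 2 * d%:R = L].
Proof.
move=> L L0 d0 Ld rho; have r0 : 0 <= rho := sqrtr_ge0 _.
have r2 : rho ^+ 2 = L / d%:R by rewrite sqr_sqrtr // divr_ge0 // ltW.
split=> //; last by rewrite r2 divfK // gt_eqF.
have : rho ^+ 2 <= 1 / (100 * 100) by rewrite r2 ler_pdivrMr //; lra.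
nra.
Qed.

Lemma event_corr (d : nat) (rho : R) (x z y : word d) : 0 <= rho ->
  (maxn (dH x y) (dH z y))%:R <= d%:R / 2 - 3 * rho * d%:R / 8 ->
  rho ^+ 2 * d%:R <= 2 * rho / 3 * (corr R x y + corr R z y).
Proof.
move=> r0 hE; rewrite /corr.
have hx := leq_maxl (dH x y) (dH z y); have hz := leq_maxr (dH x y) (dH z y).
rewrite -(ler_nat R) in hx; rewrite -(ler_nat R) in hz.
have : 3/2 * rho * d%:R <= d%:R - 2 * (dH x y)%:R + (d%:R - 2 * (dH z y)%:R) by lra.
nra.
Qed.

(* Collecting the exponent of the Chernoff bound with lam = 2 rho / 3. *)
Lemma exponent_le (rho dR : R) : 0 <= rho -> rho <= 1/100 -> 0 <= dR ->
  - (rho ^+ 2 * dR) + dR * ((1 - (1 - rho) / 2) / 2 * (41/20 * (2 * rho / 3)) ^+ 2)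
  <= - (13/25 * (rho ^+ 2 * dR)).
Proof.
move=> r0 r1 d0.
have : (1 - (1 - rho) / 2) / 2 * (41/20 * (2 * rho / 3)) ^+ 2 <= 12/25 * rho ^+ 2 by nra.
nra.
Qed.
End Asymptotics.

Theorem lemma4p3 (R : realType) (a mu1 : R) (ha : 1 < a) (hmu0 : 0 < mu1) (hmu1 : mu1 <= 1) :
  exists alpha1 : R, 0 < alpha1 /\
  exists N : nat, forall n d : nat, (N <= n)%N -> (n <= d)%N ->
    let rho := @rho_of R a mu1 n d in
    @prob_XXY R d ((1 - rho) / 2)
      (fun x x' y => (maxn (dH x y) (dH x' y))%:R <= d%:R / 2 - 3 * rho * d%:R / 8)
    <= (mu1 * n%:R) `^ (- (1 + alpha1)).
Proof.
exists (1/50); split; first lra.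
exists (Num.truncn (expR (200 * 400 + ln a - 2 * ln mu1))).+1.
move=> n d hn hd /=.
have hnY : expR (200 * 400 + ln a - 2 * ln mu1) < n%:R.
  by apply: lt_le_trans (truncnS_gt _) _; rewrite ler_nat.
have n0 : 0 < n%:R :> R := lt_trans (expR_gt0 _) hnY.
have hnd : n%:R <= d%:R :> R by rewrite ler_nat.
have [L0 Ln HL] := log_facts ha hmu0 hmu1 hnY.
have [r0 r1 r2d] := rho_facts L0 (lt_le_trans n0 hnd) (le_trans Ln hnd).
set rho := rho_of a mu1 n d in r0 r1 r2d *.
apply: le_trans (prob_XXY_le_mgf (lam := 2 * rho / 3) (c := rho ^+ 2 * d%:R) _ _ _) _.
- lra.
- lra.
- by move=> x z y /event_corr; apply.
apply: le_trans (ler_wpM2l (expR_ge0 _) (mgf_coord_pow_le d _ _ _)) _; try lra.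
have mun0 : mu1 * n%:R != 0 by rewrite mulf_neq0 // gt_eqF.
rewrite -expRD /powR (negbTE mun0) ler_expR.
by have := exponent_le r0 r1 (ler0n R d); lra.
Qed.
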